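(* Let $C=c_0c_1\dots c_{m-1}c_0$ and $D=(0)(1)\dots(n-1)(0)$ be reflexive digraph cycles with $D$ non-contractible, let $D$ have orientation string $y_1y_2\dots y_n$ and $C$ have orientation string $x_1\dots x_m$, and let $i\in\{1,\dots,n\}$ be such that $\mathrm{Mon}_1(C,D;i)$ is nonempty, with maximum element $\Phi_i^M$. There is a monotone one-step up edge from $\Phi_i^M$ to some map in $\mathrm{Mon}_1(C,D;i+1)$ if and only if $\sigma^i(D)\,y_{i+1} \leq^* C$ (subscripts of $y$ taken mod $n$ in $\{1,\dots,n\}$).
   Context: A digraph is a binary relation $\to$ on a finite vertex set; reflexive means every vertex has a loop. A digraph cycle $C=c_0c_1\dots c_{m-1}c_0$ (indices mod $m$, $m\ge3$) has underlying graph the cycle with edges $c_ic_{i+1}$; $D=(0)(1)\dots(n-1)(0)$ has vertex set the integers mod $n$; $D$ is non-contractible if it has length at least $4$ or is a directed $3$-cycle. The orientation string of $C$ is $x_1\dots x_m$ where $x_k$ is $+$, $-$ or $*$ according as the edge $c_{k-1}c_k$ is a forward arc only, a backward arc only, or symmetric (both directions); similarly $y_k$ describes the edge $(k-1)(k)$ of $D$. The shift $\sigma^i(D)$ is the string $y_{i+1}\dots y_ny_1\dots y_i$; juxtaposition denotes concatenation. For strings $Y=z_1\dots z_p$ and $X=x_1\dots x_q$, $Y\leq^* X$ means there is a strictly increasing $\alpha:\{1,\dots,p\}\to\{1,\dots,q\}$ with $z_j\in\{x_{\alpha(j)},*\}$ for all $j$. A homomorphism $\phi:C\to D$ satisfies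 $u\to v\Rightarrow\phi(u)\to\phi(v)$; $\mathrm{Hom}(C,D)$ is the digraph on homomorphisms with $\phi\to\phi'$ iff $\phi(u)\to\phi'(v)$ for all arcs $u\to v$ of $C$. Under $\phi$, edge $c_{k-1}c_k$ is increasing, stationary or decreasing as $\phi(c_k)-\phi(c_{k-1})$ is $1,0,-1$; the wind is (number of increasing minus decreasing edges)$/n$. $\mathrm{Mon}_1(C,D;i)$ is the set (induced subgraph) of wind-$1$ homomorphisms $\phi$ in which every edge is increasing or stationary and $\phi(c_0)=i$. For such $\phi$ there are exactly $n$ increasing edges $c_{k-1}c_k$, $k\in\{1,\dots,m\}$ (with $c_m=c_0$); list their indices as $\alpha_\phi(1)<\dots<\alpha_\phi(n)$. Order $\mathrm{Mon}_1(C,D;i)$ by $\phi\ge\phi'$ iff $\alpha_\phi(j)\le\alpha_{\phi'}(j)$ for all $j$; $\Phi_i^M$ denotes its maximum element (which exists when the set is nonempty). A monotone one-step up edge from $\phi$ to $\phi'$ (both wind-$1$ homomorphisms with all edges increasing or stationary) means: for some subpath of $C$ with vertex set $S$ all of whose edges are stationary under $\phi$ (so $\phi(S)=\{d\}$), $\phi'$ agrees with $\phi$ off $S$ and maps $S$ to $d+1$. *)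

From mathcomp Require Import all_boot.
Set Implicit Arguments. Unset Strict Implicit. Unset Printing Implicit Defensive.

(* Orientation symbols: Fwd = '+', Bwd = '-', Sym = '*'. *)
Inductive orient := Fwd | Bwd | Sym.

Definition has_fwd (o : orient) : bool := if o is Bwd then false else true.
Definition has_bwd (o : orient) : bool := if o is Fwd then false else true.

(* A reflexive digraph cycle on vertices 'I_N = {0,..,N-1} (N >= 3) is
   determined by its orientation string s = x_1 ... x_N (a seq of size N):
   x_{k+1} = nth Sym s k describes the edge between vertex k and k+1 (mod N). *)
Definition carc N (s : seq orient) (u v : 'I_N) : bool :=
  [|| u == v,
      (v == ordS u) && has_fwd (nth Sym s u)
    | (u == ordS v) && has_bwd (nth Sym s v)].

Definition noncontractible n (ys : n.-tuple orient) : Prop :=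
  3 <= n /\
  (4 <= n \/ (forall k, k < n -> nth Sym ys k = Fwd)
          \/ (forall k, k < n -> nth Sym ys k = Bwd)).

Section Homs.
Variables (m n : nat) (xs : m.-tuple orient) (ys : n.-tuple orient).

Definition is_hom (phi : 'I_m -> 'I_n) : Prop :=
  forall u v : 'I_m, carc xs u v -> carc ys (phi u) (phi v).

(* Edge e : 'I_m is the edge c_e c_{e+1} (the paper's edge number e+1). *)
Definition inc_edge (phi : 'I_m -> 'I_n) (e : 'I_m) : bool :=
  phi (ordS e) == ordS (phi e).
Definition stat_edge (phi : 'I_m -> 'I_n) (e : 'I_m) : bool :=
  phi (ordS e) == phi e.
Definition dec_edge (phi : 'I_m -> 'I_n) (e : 'I_m) : bool :=
  phi e == ordS (phi (ordS e)).

(* wind = (#increasing - #decreasing) / n; wind 1 stated as #inc = n + #dec (in nat) *)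
Definition wind_one (phi : 'I_m -> 'I_n) : Prop :=
  #|[pred e | inc_edge phi e]| = n + #|[pred e | dec_edge phi e]|.

Definition mon_hom (phi : 'I_m -> 'I_n) : Prop :=
  [/\ is_hom phi, wind_one phi & forall e, inc_edge phi e || stat_edge phi e].

Definition Mon1 (i : nat) (phi : 'I_m -> 'I_n) : Prop :=
  mon_hom phi /\ forall u : 'I_m, val u = 0 -> val (phi u) = i %% n.

Definition alpha (phi : 'I_m -> 'I_n) : seq nat :=
  [seq (val e).+1 | e <- enum 'I_m & inc_edge phi e].

Definition mon_ge (phi phi' : 'I_m -> 'I_n) : Prop :=
  forall j, j < n -> nth 0 (alpha phi) j <= nth 0 (alpha phi') j.

Definition is_max_Mon1 (i : nat) (Phi : 'I_m -> 'I_n) : Prop :=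
  Mon1 i Phi /\ forall phi', Mon1 i phi' -> mon_ge Phi phi'.

(* Subpath of C starting at vertex a with l vertices (1 <= l <= m):
   vertices a, a+1, ..., a+l-1 (mod m); its edges are the edges e with
   e = a + t (mod m), t < l - 1. *)
Definition in_path (a : 'I_m) (l : nat) (u : 'I_m) : bool :=
  (u + m - a) %% m < l.
Definition edge_in_path (a : 'I_m) (l : nat) (e : 'I_m) : bool :=
  (e + m - a) %% m < l.-1.

Definition one_step_up (phi phi' : 'I_m -> 'I_n) : Prop :=
  mon_hom phi /\ mon_hom phi' /\
  exists (a : 'I_m) (l : nat) (d : 'I_n),
    [/\ 0 < l <= m,
        (forall e, edge_in_path a l e -> stat_edge phi e),
        (forall u, in_path a l u -> phi u = d),
        (forall u, in_path a l u -> phi' u = ordS d)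
      & (forall u, ~~ in_path a l u -> phi' u = phi u)].
End Homs.

Definition star_le (Y X : seq orient) : Prop :=
  exists alpha : nat -> nat,
    [/\ forall j1 j2, j1 < j2 < size Y -> alpha j1 < alpha j2,
        forall j, j < size Y -> alpha j < size X
      & forall j, j < size Y ->
          nth Sym Y j = nth Sym X (alpha j) \/ nth Sym Y j = Sym].

(* sigma^i(D) = y_{i+1} ... y_n y_1 ... y_i *)
Definition shift (i : nat) (ys : seq orient) : seq orient := rot i ys.

From mathcomp Require Import all_boot zify.
Set Implicit Arguments. Unset Strict Implicit. Unset Printing Implicit Defensive.

(* A map in Mon_1(C,D;i) is determined by the set Q of its n increasing edges:
   it sends c_u to i + #{e in Q | e < u} (mod n), and it is a homomorphism
   exactly when the orientation of each edge in Q is refined by that of the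
   edge of D it lands on.  Hence sigma^i(D) y_{i+1} <=* C says that some
   admissible Q for Mon_1(C,D;i) is followed by an edge k of C fitting
   y_{i+1}; by maximality of Phi_i^M, the increasing edges of Phi_i^M also all
   lie before k.  A monotone one-step up edge from Phi_i^M into
   Mon_1(C,D;i+1) lifts a stationary arc through c_0: the edge k entering the
   arc becomes increasing and the first increasing edge becomes stationary.
   Conversely, trading the first increasing edge of Phi_i^M for such a k is
   a one-step up edge. *)

Definition ordmod N (N_gt0 : 0 < N) k : 'I_N := Ordinal (ltn_pmod k N_gt0).

Section OrdMod.
Variables (N : nat) (N_gt0 : 0 < N).

Lemma ordmodK (x : 'I_N) : ordmod N_gt0 x = x.
Proof. by apply: val_inj; rewrite /= modn_small. Qed.

Lemma ordS_ordmod k : ordS (ordmod N_gt0 k) = ordmod N_gt0 k.+1.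
Proof. by apply: val_inj; rewrite /= -addn1 modnDml addn1. Qed.

Lemma ordmodDr k : ordmod N_gt0 (k + N) = ordmod N_gt0 k.
Proof. by apply: val_inj; rewrite /= modnDr. Qed.

End OrdMod.

Lemma eqn_modDr_small N k r : 0 < r < N -> (k + r == k %[mod N]) = false.
Proof. by move=> r_range; rewrite -{2}[k]addn0 eqn_modDl mod0n modn_small //; lia. Qed.

Section OrdS.
Variables (N : nat) (N_gt2 : 2 < N).
Let N_gt0 : 0 < N := ltnW (ltnW N_gt2).

Lemma ordS_neq (x : 'I_N) : x != ordS x.
Proof.
by rewrite -(ordmodK N_gt0 x) ordS_ordmod -val_eqE /= eq_sym -addn1 eqn_modDr_small //; lia.
Qed.

Lemma ordSS_neq (x : 'I_N) : x != ordS (ordS x).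
Proof.
by rewrite -(ordmodK N_gt0 x) !ordS_ordmod -val_eqE /= eq_sym -addn2 eqn_modDr_small //; lia.
Qed.

Lemma ordS_step_eq (x d : 'I_N) :
  (d == ordS x) || (d == x) -> (ordS d == ordS x) || (ordS d == x) -> x = d.
Proof.
move=> step_d /orP[/eqP/ordS_inj // | /eqP x_Sd].
by move: step_d; rewrite -x_Sd (negbTE (ordSS_neq d)) (negbTE (ordS_neq d)).
Qed.

End OrdS.

Definition orient_le (x y : orient) : bool :=
  (has_fwd x ==> has_fwd y) && (has_bwd x ==> has_bwd y).

Lemma orient_leP x y : reflect (y = x \/ y = Sym) (orient_le x y).
Proof. by case: x; case: y; constructor; intuition discriminate. Qed.

Definition count_below (q : pred nat) k := count q (iota 0 k).

Lemma count_below0 q : count_below q 0 = 0.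
Proof. by []. Qed.

Lemma count_belowS q k : count_below q k.+1 = count_below q k + q k.
Proof. by rewrite /count_below -addn1 iotaD count_cat /= addn0. Qed.

Lemma leq_count_below q a b : a <= b -> count_below q a <= count_below q b.
Proof. by move=> ab; rewrite /count_below -(subnKC ab) iotaD count_cat leq_addr. Qed.

Lemma count_below_flat q a b e :
  a <= e < b -> count_below q a = count_below q b -> q e = false.
Proof.
move=> /andP[ae eb] flat; apply/negbTE/negP => qe.
have := leq_count_below q ae; have := leq_count_below q eb.
by rewrite count_belowS qe flat; lia.
Qed.

Lemma count_below_nth q M j : j < count_below q M ->
  let e := nth 0 (filter q (iota 0 M)) j in [/\ q e, e < M & count_below q e = j].
Proof.
move=> j_lt e.
have : e \in filter q (iota 0 M) by rewrite mem_nth // size_filter.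
rewrite mem_filter mem_iota => /andP[qe /andP[_ e_lt]]; split=> //.
elim: M j j_lt @e {qe e_lt} => [|M IH] j //.
rewrite count_belowS -[M.+1]addn1 iotaD filter_cat /= add0n.
case qM: (q M) => /=; rewrite ?addn0 ?cats0; last exact: IH.
rewrite nth_cat size_filter addn1 ltnS leq_eqVlt => /orP[/eqP ->|lt].
  by rewrite ltnn subnn.
by rewrite lt IH.
Qed.

Lemma count_below_full (q : pred nat) (M n k : nat) :
  0 < n -> count_below q M = n -> k <= M ->
  (count_below q k == n) = (nth 0 (filter q (iota 0 M)) n.-1 < k).
Proof.
move=> n_gt0 qM k_le; have [] := @count_below_nth q M n.-1; first lia.
set L := nth 0 _ _ => qL L_lt cL.
apply/eqP/idP => [cK | L_lt_k].
  rewrite ltnNge; apply/negP => /(leq_count_below q); lia.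
have := leq_count_below q L_lt_k; have := leq_count_below q k_le.
by rewrite count_belowS qL cL; lia.
Qed.

Lemma count_below_mem (B : seq nat) k :
  uniq B -> count_below (mem B) k = count (fun b => b < k) B.
Proof.
move=> uB; rewrite /count_below -!size_filter; apply: perm_size.
apply: uniq_perm; rewrite ?filter_uniq ?iota_uniq // => x.
by rewrite !mem_filter mem_iota /= andbC.
Qed.

Lemma count_ltn_iota j M : j <= M -> count (fun x => x < j) (iota 0 M) = j.
Proof.
move=> jM; rewrite -(subnKC jM) iotaD count_cat add0n.
rewrite (eq_in_count (a2 := predT)) ?count_predT ?size_iota; last first.
  by move=> x; rewrite mem_iota.
rewrite (eq_in_count (a2 := pred0)) ?count_pred0 ?addn0 // => x.
by rewrite mem_iota => /andP[jx _] /=; rewrite ltnNge jx.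
Qed.

Lemma count_below_skip (q : pred nat) a b :
  a <= b -> (forall e, a <= e < b -> ~~ q e) -> count_below q b = count_below q a.
Proof.
move=> ab skip; rewrite /count_below -(subnKC ab) iotaD count_cat add0n -[RHS]addn0.
congr (_ + _); apply/eqP; rewrite -leqn0 leqNgt -has_count; apply/hasPn => e.
by rewrite mem_iota subnKC //; exact: skip.
Qed.

Lemma count_below_swap (q : pred nat) (a b k : nat) : q a -> ~~ q b ->
  count_below (fun x => (q x && (x != a)) || (x == b)) k
  = count_below q k - (a < k) + (b < k).
Proof.
move=> qa nqb; have ab : (a == b) = false by apply/negbTE; apply: contraNneq nqb => <-.
elim: k => [|k IH] //; rewrite !count_belowS IH !ltnS (leq_eqVlt a) (leq_eqVlt b).
have pos : a < k -> 0 < count_below q k.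
  by move=> /(leq_count_below q); rewrite count_belowS qa; lia.
case: (eqVneq k a) => [->|_]; first by rewrite ltnn qa ab eq_sym ab /=; lia.
case: (eqVneq k b) => [->|_]; first by rewrite (negbTE nqb) /=; lia.
by rewrite /= andbT orbF; case: (q k) => /=; lia.
Qed.

Lemma nth_rcons_shift n (ys : n.-tuple orient) i j : i <= n -> j <= n ->
  nth Sym (rcons (shift i ys) (nth Sym ys (i %% n))) j = nth Sym ys ((i + j) %% n).
Proof.
move=> i_le j_le; rewrite nth_rcons size_rot size_tuple.
case: (ltngtP j n) => [j_lt | j_gt | ->]; [ | lia | by rewrite modnDr].
rewrite /shift /rot nth_cat size_drop size_tuple.
case: ltnP => j_i.
  by rewrite nth_drop modn_small //; lia.
rewrite nth_take; last lia.
have -> : i + j = j - (n - i) + n by lia.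
by rewrite modnDr modn_small //; lia.
Qed.

Lemma card_pred_iota m (m_gt0 : 0 < m) (P : pred 'I_m) :
  #|[pred e | P e]| = count (fun k => P (ordmod m_gt0 k)) (iota 0 m).
Proof.
rewrite cardE /enum_mem size_filter -enumT -val_enum_ord count_map.
by apply: eq_count => x /=; rewrite ordmodK.
Qed.

Section Monotone.
Variables (m n : nat) (xs : m.-tuple orient) (ys : n.-tuple orient).
Hypotheses (m_gt0 : 0 < m) (n_gt2 : 2 < n).
Let n_gt0 : 0 < n := ltnW (ltnW n_gt2).

(* Every map in Mon_1(C,D;s) has this form, [q] being its set of increasing
   edges. *)
Definition stair (s : nat) (q : pred nat) : 'I_m -> 'I_n :=
  fun u => ordmod n_gt0 (s + count_below q u).

Definition inc_set (phi : 'I_m -> 'I_n) : pred nat :=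
  fun k => inc_edge phi (ordmod m_gt0 k).

Definition mon_edges (s : nat) (q : pred nat) : Prop :=
  count_below q m = n /\
  forall e, e < m -> q e ->
    orient_le (nth Sym xs e) (nth Sym ys ((s + count_below q e) %% n)).

Lemma is_hom_monP (phi : 'I_m -> 'I_n) :
  (forall e, inc_edge phi e || stat_edge phi e) ->
  is_hom xs ys phi <->
  forall e, inc_edge phi e -> orient_le (nth Sym xs e) (nth Sym ys (phi e)).
Proof.
move=> inc_stat; split=> [hom e /eqP inc | orient u v].
  have nS := ordS_neq n_gt2 (phi e); have nSS := ordSS_neq n_gt2 (phi e).
  apply/andP; split; apply/implyP => arc.
  - have /hom : carc xs e (ordS e) by rewrite /carc eqxx arc orbT.
    by rewrite inc /carc (negbTE nS) (negbTE nSS) eqxx /= => /orP[] // /andP[].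
  - have /hom : carc xs (ordS e) e by rewrite /carc eqxx arc !orbT.
    by rewrite inc /carc eq_sym (negbTE nS) (negbTE nSS) eqxx.
rewrite /carc => /or3P[/eqP-> | /andP[/eqP-> fwd] | /andP[/eqP-> bwd]].
- by rewrite eqxx.
- case/orP: (inc_stat u) => [inc | /eqP->]; last by rewrite eqxx.
  by move/andP: (orient u inc) => [/implyP/(_ fwd) -> _]; rewrite (eqP inc) eqxx orbT.
- case/orP: (inc_stat v) => [inc | /eqP->]; last by rewrite eqxx.
  by move/andP: (orient v inc) => [_ /implyP/(_ bwd) ->]; rewrite (eqP inc) eqxx !orbT.
Qed.

Lemma dec_edge_incstat (phi : 'I_m -> 'I_n) e :
  inc_edge phi e || stat_edge phi e -> dec_edge phi e = false.
Proof.
by case/orP=> /eqP E; rewrite /dec_edge E; apply/negbTE; [apply: ordSS_neq | apply: ordS_neq].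
Qed.

Lemma stat_edge_not_inc (phi : 'I_m -> 'I_n) e : stat_edge phi e -> ~~ inc_edge phi e.
Proof. by move=> /eqP stat; rewrite /inc_edge stat (ordS_neq n_gt2). Qed.

Lemma wind_one_incstat (phi : 'I_m -> 'I_n) :
  (forall e, inc_edge phi e || stat_edge phi e) ->
  wind_one phi <-> count_below (inc_set phi) m = n.
Proof.
move=> inc_stat; rewrite /wind_one (@eq_card0 _ [pred e | dec_edge phi e]) ?addn0.
  by rewrite card_pred_iota.
by move=> e; rewrite !inE dec_edge_incstat.
Qed.

Lemma stair_ordS s q (e : 'I_m) : count_below q m = n ->
  stair s q (ordS e) = ordmod n_gt0 (s + count_below q e + q e).
Proof.
move=> qm; rewrite /stair /=; case: (ltnP e.+1 m) => e_lt.
  by rewrite modn_small // count_belowS addnA.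
have e_last : e.+1 = m by have := ltn_ord e; lia.
by rewrite e_last modnn -addnA -count_belowS e_last qm addn0 ordmodDr.
Qed.

Lemma inc_edge_stair s q (e : 'I_m) : count_below q m = n ->
  inc_edge (stair s q) e = q e.
Proof.
move=> qm; rewrite /inc_edge stair_ordS // ordS_ordmod -val_eqE /=.
case: (q e); first by rewrite addn1 eqxx.
by rewrite addn0 eq_sym -addn1 eqn_modDr_small //; lia.
Qed.

Lemma stat_edge_stair s q (e : 'I_m) : count_below q m = n ->
  ~~ q e -> stat_edge (stair s q) e.
Proof. by move=> qm /negbTE qe; rewrite /stat_edge stair_ordS // qe addn0. Qed.

Lemma inc_set_stair s q k : count_below q m = n -> k < m ->
  inc_set (stair s q) k = q k.
Proof. by move=> qm k_lt; rewrite /inc_set inc_edge_stair //= modn_small. Qed.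

Lemma Mon1_stair s q : mon_edges s q -> Mon1 xs ys s (stair s q).
Proof.
move=> [qm orient].
have inc_stat e : inc_edge (stair s q) e || stat_edge (stair s q) e.
  by rewrite inc_edge_stair //; case: (boolP (q e)) => // /(stat_edge_stair s qm).
split; last by move=> u u0; rewrite /stair /= u0 addn0.
split=> //.
- apply/is_hom_monP => // e; rewrite inc_edge_stair //.
  exact: orient (ltn_ord e).
- apply/wind_one_incstat => //; rewrite -[RHS]qm.
  apply: eq_in_count => k; rewrite mem_iota => /andP[_ k_lt].
  exact: inc_set_stair.
Qed.

Lemma Mon1_mon_edges s phi :
  Mon1 xs ys s phi -> mon_edges s (inc_set phi) /\ phi =1 stair s (inc_set phi).
Proof.
move=> [[hom wind inc_stat] start]; set q := inc_set phi.
have qE (e : 'I_m) : q e = inc_edge phi e by rewrite /q /inc_set ordmodK.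
have qm : count_below q m = n by apply/wind_one_incstat.
have phiE : phi =1 stair s q.
  suff stairE k : k < m -> phi (ordmod m_gt0 k) = stair s q (ordmod m_gt0 k).
    by move=> u; rewrite -(ordmodK m_gt0 u) stairE.
  elim: k => [_ | k IH k_lt].
    by apply: val_inj; rewrite start /= mod0n ?count_below0 ?addn0.
  set e := ordmod m_gt0 k; rewrite -ordS_ordmod -/e.
  case/orP: (inc_stat e) => [inc | stat].
    have := inc_edge_stair s e qm; rewrite qE inc => /eqP ->.
    by rewrite (eqP inc) IH //; lia.
  have nqe : ~~ q e by rewrite qE stat_edge_not_inc.
  by rewrite (eqP stat) (eqP (stat_edge_stair s qm nqe)) IH //; lia.
split=> //; split=> // e e_lt qe.
have := proj1 (is_hom_monP inc_stat) hom (ordmod m_gt0 e).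
by rewrite phiE /= modn_small //; apply.
Qed.

Lemma alphaE phi :
  alpha phi = map succn (filter (inc_set phi) (iota 0 m)).
Proof.
rewrite /alpha -val_enum_ord filter_map -map_comp.
by congr map; apply: eq_filter => x /=; rewrite /inc_set ordmodK.
Qed.

Lemma mon_ge_count_below s Phi phi k :
  Mon1 xs ys s Phi -> Mon1 xs ys s phi -> mon_ge Phi phi -> k <= m ->
  count_below (inc_set phi) k = n -> count_below (inc_set Phi) k = n.
Proof.
move=> /Mon1_mon_edges[[PhiM _] _] /Mon1_mon_edges[[phiM _] _] ge k_le /eqP.
rewrite (count_below_full n_gt0 phiM k_le).
move=> last_lt; apply/eqP; rewrite (count_below_full n_gt0 PhiM k_le).
have sizeP : size (filter (inc_set Phi) (iota 0 m)) = n by rewrite size_filter.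
have sizep : size (filter (inc_set phi) (iota 0 m)) = n by rewrite size_filter.
have := ge n.-1; rewrite !alphaE !(nth_map 0) ?sizeP ?sizep; lia.
Qed.

(* With [mon_edges s q], this is an embedding for sigma^s(D) y_{s+1} <=* C
   whose last letter goes to edge [k]; note that y_{s+1} is
   [nth Sym ys (s %% n)], strings being 0-indexed. *)
Definition extra_edge (s : nat) (q : pred nat) (k : nat) : Prop :=
  [/\ k < m, count_below q k = n & orient_le (nth Sym xs k) (nth Sym ys (s %% n))].

Lemma star_le_of_extra_edge i q k : i <= n -> mon_edges i q -> extra_edge i q k ->
  star_le (rcons (shift i ys) (nth Sym ys (i %% n))) xs.
Proof.
move=> i_le [_ q_orient] [k_lt qk k_orient].
pose A := filter q (iota 0 k).
have A_nth j : j < n -> [/\ q (nth 0 A j), nth 0 A j < k & count_below q (nth 0 A j) = j].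
  by move=> j_lt; apply: count_below_nth; rewrite qk.
exists (fun j => if j < n then nth 0 A j else k).
rewrite size_rcons size_rot size_tuple; split.
- move=> j1 j2 /andP[j12 j2_le]; have j1_lt : j1 < n by lia.
  have [_ A1_lt A1_cnt] := A_nth j1 j1_lt; rewrite j1_lt.
  case: ifP => // j2_lt; have [_ _ A2_cnt] := A_nth j2 j2_lt.
  rewrite ltnNge; apply/negP => /(leq_count_below q); lia.
- move=> j j_le; rewrite size_tuple; case: ifP => [j_lt | _]; last by [].
  by have [_ A_lt _] := A_nth j j_lt; lia.
- move=> j; rewrite ltnS => j_le; apply/orient_leP; rewrite nth_rcons_shift //.
  case: ifP => [j_lt | j_ge]; last first.
    have -> : j = n by lia.
    by rewrite modnDr.
  have [qA A_lt A_cnt] := A_nth j j_lt.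
  by have := q_orient _ (ltn_trans A_lt k_lt) qA; rewrite A_cnt.
Qed.

Lemma extra_edge_of_star_le i : i <= n ->
  star_le (rcons (shift i ys) (nth Sym ys (i %% n))) xs ->
  exists q k, mon_edges i q /\ extra_edge i q k.
Proof.
move=> i_le [beta []]; rewrite size_rcons size_rot !size_tuple => mono bnd cmp.
have beta_lt j1 j2 : j1 < n.+1 -> j2 < n.+1 -> (beta j1 < beta j2) = (j1 < j2).
  move=> j1_lt j2_lt; case: (ltngtP j1 j2) => [j12 | j21 | ->]; last exact: ltnn.
  - by apply: mono; lia.
  - by apply/negbTE; rewrite -leqNgt ltnW //; apply: mono; lia.
pose B := map beta (iota 0 n).
have B_uniq : uniq B.
  apply: (sorted_uniq ltn_trans ltnn).
  apply: (@homo_sorted_in _ _ (fun j => j < n.+1) beta ltn ltn).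
  - by move=> x y x_lt y_lt /=; rewrite beta_lt.
  - by apply/allP => x; rewrite mem_iota; lia.
  - exact: iota_ltn_sorted.
have B_cnt j : j <= n -> count_below (mem B) (beta j) = j.
  move=> j_le; rewrite count_below_mem // count_map -[RHS](count_ltn_iota j_le).
  by apply: eq_in_count => x; rewrite mem_iota /= => x_lt; rewrite beta_lt //; lia.
exists (mem B), (beta n); split; last first.
  split; [exact: bnd n (ltnSn n) | exact: B_cnt | ].
  by apply/orient_leP; have := cmp n (ltnSn n); rewrite nth_rcons_shift // modnDr.
split.
  rewrite count_below_mem // (eq_in_count (a2 := predT)) ?count_predT ?size_map ?size_iota //.
  by move=> b /mapP[j]; rewrite mem_iota => /andP[_ j_lt] ->; apply: bnd; lia.
move=> e _ /mapP[j]; rewrite mem_iota => /andP[_ j_lt] ->.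
have j_le : j <= n by lia.
apply/orient_leP; rewrite B_cnt // -nth_rcons_shift //; apply: cmp; lia.
Qed.

Lemma ord_predE (a : 'I_m) :
  nat_of_ord (ord_pred a) = if a == 0 :> nat then m.-1 else a.-1.
Proof.
rewrite /=; case: eqP => [-> | a_pos]; first by rewrite add0n modn_small //; lia.
have -> : (a + m).-1 = a.-1 + m by lia.
by rewrite modnDr modn_small //; have := ltn_ord a; lia.
Qed.

Lemma path_offsetE (a u : 'I_m) :
  (u + m - a) %% m = if a <= u then u - a else u + m - a.
Proof.
have := ltn_ord a; have := ltn_ord u; case: (leqP a u) => au u_lt a_lt.
  by rewrite (_ : u + m - a = u - a + m) ?modnDr ?modn_small //; lia.
by rewrite modn_small //; lia.
Qed.

Lemma in_path_start (a : 'I_m) l : 0 < l -> in_path a l a.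
Proof. by rewrite /in_path path_offsetE leqnn subnn. Qed.

Lemma in_path_pred (a : 'I_m) l : l < m -> ~~ in_path a l (ord_pred a).
Proof.
rewrite /in_path path_offsetE ord_predE -leqNgt; have := ltn_ord a.
by case: (a =P 0 :> nat) => a0; case: ifP; lia.
Qed.

Lemma edge_in_path_full (a e : 'I_m) : e != ord_pred a :> nat -> edge_in_path a m e.
Proof.
rewrite /edge_in_path path_offsetE ord_predE; have := ltn_ord a; have := ltn_ord e.
by case: (a =P 0 :> nat) => a0; case: ifP; lia.
Qed.

Lemma edge_in_path_after_pred (a e : 'I_m) l :
  in_path a l (Ordinal m_gt0) -> ord_pred a < e -> edge_in_path a l e.
Proof.
rewrite /edge_in_path /in_path !path_offsetE ord_predE /=; have := ltn_ord a; have := ltn_ord e.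
by case: (a =P 0 :> nat) => a0; case: ifP; case: ifP; lia.
Qed.

Lemma stat_path_through_origin s Phi a l :
  Mon1 xs ys s Phi -> 0 < l <= m -> in_path a l (Ordinal m_gt0) ->
  (forall e, edge_in_path a l e -> stat_edge Phi e) ->
  l < m /\ count_below (inc_set Phi) (ord_pred a).+1 = n.
Proof.
move=> PhiM l_range origin stat; have [[qm _] _] := Mon1_mon_edges PhiM.
set q := inc_set Phi in qm *; set e0 := ord_pred a.
have path_not_inc (e : 'I_m) : edge_in_path a l e -> ~~ q e.
  by move=> /stat /stat_edge_not_inc; rewrite /q /inc_set ordmodK.
have q_e0S : count_below q e0.+1 = n.
  rewrite -qm; apply/esym/count_below_skip => [|e /andP[e0_lt e_lt]]; first exact: ltn_ord.
  exact: (path_not_inc _ (@edge_in_path_after_pred a (Ordinal e_lt) l origin e0_lt)).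
split=> //; rewrite ltnNge; apply/negP => l_ge.
have q_e0 : count_below q e0 = 0.
  rewrite (@count_below_skip q 0) // => e /andP[_ e_lt].
  have e_m : e < m by have := ltn_ord e0; lia.
  apply: (path_not_inc (Ordinal e_m)); rewrite (_ : l = m); last lia.
  by rewrite edge_in_path_full // neq_ltn; apply/orP; left.
by move: q_e0S; rewrite count_belowS q_e0; case: (q e0); lia.
Qed.

Lemma extra_edge_of_one_step_up i Phi phi' :
  Mon1 xs ys i Phi -> Mon1 xs ys i.+1 phi' -> one_step_up xs ys Phi phi' ->
  exists k, extra_edge i (inc_set Phi) k.
Proof.
move=> PhiM [[phi'_hom _ phi'_mon] phi'0].
move=> [_ [_ [a [l [d [l_range stat on_path up off_path]]]]]].
have [[_ _ Phi_mon] Phi0] := PhiM.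
set u0 := Ordinal m_gt0; set e0 := ord_pred a.
have u0_path : in_path a l u0.
  apply: contraT => /off_path phi'_u0; move: (phi'0 u0 erefl).
  by rewrite phi'_u0 (Phi0 u0 erefl) => /eqP; rewrite eq_sym -addn1 eqn_modDr_small //; lia.
have [l_lt q_e0S] := stat_path_through_origin PhiM l_range u0_path stat.
have e0S : ordS e0 = a := ord_predK a.
have a_path : in_path a l a by apply: in_path_start; lia.
have e0_off : phi' e0 = Phi e0 by apply: off_path; exact: in_path_pred.
(* The edge [e0] entering the lifted arc is stationary for [Phi] and
   increasing for [phi']. *)
have Phi_e0 : Phi e0 = d.
  apply: (ordS_step_eq n_gt2).
    by have := Phi_mon e0; rewrite /inc_edge /stat_edge e0S (on_path _ a_path).
  by have := phi'_mon e0; rewrite /inc_edge /stat_edge e0S (up _ a_path) e0_off.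
have q_e0 : inc_set Phi e0 = false.
  rewrite /inc_set ordmodK; apply/negbTE/stat_edge_not_inc.
  by rewrite /stat_edge e0S (on_path _ a_path) Phi_e0.
exists e0; split; first exact: ltn_ord.
  by move: q_e0S; rewrite count_belowS q_e0 addn0.
have := proj1 (is_hom_monP phi'_mon) phi'_hom e0.
rewrite /inc_edge e0S (up _ a_path) e0_off Phi_e0 eqxx => /(_ isT).
by rewrite -(on_path _ u0_path) (Phi0 u0 erefl).
Qed.

Lemma extra_edge_bounds i q k : mon_edges i q -> extra_edge i q k ->
  let a := nth 0 (filter q (iota 0 m)) 0 in
  [/\ q a, a < k, (forall e, e < m -> q e -> a <= e < k),
      (forall u, u <= a -> count_below q u = 0)
    & (forall u, k <= u <= m -> count_below q u = n)].
Proof.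
move=> [qm _] [k_lt qk _] a.
have := @count_below_nth q m 0; rewrite qm => /(_ n_gt0) [qa a_lt qa0].
have below_a u : u <= a -> count_below q u = 0.
  by move=> /(leq_count_below q); rewrite qa0; lia.
have above_k u : k <= u <= m -> count_below q u = n.
  by move=> /andP[/(leq_count_below q) ku /(leq_count_below q) um]; lia.
have a_lt_k : a < k.
  by rewrite ltnNge; apply/negP => /below_a; rewrite qk; lia.
split=> // e e_lt qe; apply/andP; split.
  rewrite leqNgt; apply/negP => /below_a; rewrite count_belowS qe; lia.
rewrite ltnNge; apply/negP => ke.
by rewrite (@count_below_flat q k m e) ?ke ?e_lt // qk qm in qe.
Qed.

Lemma mon_edges_swap i q k : mon_edges i q -> extra_edge i q k ->
  let a := nth 0 (filter q (iota 0 m)) 0 in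
  mon_edges i.+1 (fun x => (q x && (x != a)) || (x == k)).
Proof.
move=> qE kE a; have [[qm q_orient] [k_lt _ k_orient]] := (qE, kE).
have [qa a_lt_k sel below_a above_k] := extra_edge_bounds qE kE.
have nqk : ~~ q k by apply/negP => /(sel _ k_lt); rewrite ltnn andbF.
have cnt' u := count_below_swap u qa nqk.
split; first by rewrite cnt' above_k ?k_lt ?leqnn //; lia.
move=> e e_lt /orP[/andP[qe e_a] | /eqP ->].
- have /andP[a_le e_lt_k] := sel e e_lt qe.
  have a_e : a < e by rewrite ltn_neqAle eq_sym e_a.
  have := leq_count_below q a_e; rewrite count_belowS qa below_a // => c_pos.
  rewrite cnt' a_e ltnNge (ltnW e_lt_k) /= (_ : i.+1 + _ = i + count_below q e); last lia.
  exact: q_orient.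
- rewrite cnt' a_lt_k ltnn above_k ?leqnn ?(ltnW k_lt) //.
  by rewrite (_ : i.+1 + _ = i + n) ?modnDr //; lia.
Qed.

Lemma in_path_wrap k b (u : 'I_m) : b < k < m ->
  in_path (ordmod m_gt0 k.+1) (m - k + b) u = (k < u) || (u <= b).
Proof.
move=> /andP[bk km]; rewrite /in_path path_offsetE /=; have := ltn_ord u.
case: (ltngtP k.+1 m) => [Sk | Sk | Sk];
  [rewrite modn_small //; case: (leqP k.+1 u) | | rewrite Sk modnn leq0n subn0]; lia.
Qed.

Lemma edge_in_path_wrap k b (e : 'I_m) : b < k < m ->
  edge_in_path (ordmod m_gt0 k.+1) (m - k + b) e = (k < e) || (e < b).
Proof.
move=> /andP[bk km]; rewrite /edge_in_path path_offsetE /=; have := ltn_ord e.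
case: (ltngtP k.+1 m) => [Sk | Sk | Sk];
  [rewrite modn_small //; case: (leqP k.+1 e) | | rewrite Sk modnn leq0n subn0]; lia.
Qed.

Lemma one_step_up_of_extra_edge i Phi k :
  Mon1 xs ys i Phi -> extra_edge i (inc_set Phi) k ->
  exists phi', Mon1 xs ys i.+1 phi' /\ one_step_up xs ys Phi phi'.
Proof.
move=> PhiM kE; have [qE PhiE] := Mon1_mon_edges PhiM.
set q := inc_set Phi in qE PhiE kE; set a := nth 0 (filter q (iota 0 m)) 0.
have [qa a_lt_k sel below_a above_k] := extra_edge_bounds qE kE.
have [[qm _] [k_lt _ _]] := (qE, kE).
have nqk : ~~ q k by apply/negP => /(sel _ k_lt); rewrite ltnn andbF.
(* Make [k] increasing and [a] stationary: this lifts the arc from c_{k+1}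
   around through c_0 to c_a. *)
have phi'M := Mon1_stair (mon_edges_swap qE kE).
exists (stair i.+1 (fun x => (q x && (x != a)) || (x == k))); split=> //.
split; first exact: PhiM.1; split; first exact: phi'M.1.
exists (ordmod m_gt0 k.+1), (m - k + a), (ordmod n_gt0 i).
have a_k_m : a < k < m by rewrite a_lt_k.
have ordmod_wrap s c : c = 0 \/ c = n -> ordmod n_gt0 (s + c) = ordmod n_gt0 s.
  by case=> ->; rewrite ?addn0 ?ordmodDr.
split.
- lia.
- move=> e; rewrite edge_in_path_wrap // => e_out.
  rewrite /stat_edge !PhiE; apply: stat_edge_stair => //; apply/negP => /(sel _ (ltn_ord e)).
  by case/andP; case/orP: e_out; lia.
- move=> u; rewrite in_path_wrap // PhiE => u_in; apply: ordmod_wrap.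
  by have := below_a u; have := above_k u; have := ltn_ord u; lia.
- move=> u; rewrite in_path_wrap // => u_in; rewrite /stair count_below_swap // ordS_ordmod.
  apply: ordmod_wrap.
  by have := below_a u; have := above_k u; have := ltn_ord u; lia.
- move=> u; rewrite in_path_wrap // => /norP[/negbTE k_u]; rewrite -ltnNge => a_u.
  rewrite PhiE /stair count_below_swap // a_u k_u; congr ordmod.
  have := leq_count_below q a_u; rewrite count_belowS qa below_a //; lia.
Qed.

Lemma extra_edge_max i Phi q k :
  is_max_Mon1 xs ys i Phi -> mon_edges i q -> extra_edge i q k ->
  extra_edge i (inc_set Phi) k.
Proof.
move=> [PhiM Phi_max] qE [k_lt qk k_orient]; have phiM := Mon1_stair qE.
split=> //; apply: (mon_ge_count_below PhiM phiM (Phi_max _ phiM)); first exact: ltnW.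
rewrite -qk; apply: eq_in_count => e; rewrite mem_iota => /andP[_ e_lt].
by rewrite inc_set_stair ?qE.1 //; lia.
Qed.

End Monotone.

Theorem fact3p6 (m n : nat) (xs : m.-tuple orient) (ys : n.-tuple orient)
    (i : nat) (Phi : 'I_m -> 'I_n) :
  3 <= m ->
  noncontractible ys ->
  1 <= i <= n ->
  is_max_Mon1 xs ys i Phi ->
  ((exists phi' : 'I_m -> 'I_n,
      Mon1 xs ys i.+1 phi' /\ one_step_up xs ys Phi phi')
   <-> star_le (rcons (shift i ys) (nth Sym ys (i %% n))) xs).
Proof.
(* Non-contractibility is only used through 3 <= n. *)
move=> m_ge3 [n_gt2 _] /andP[_ i_le] PhiMax; have m_gt0 : 0 < m by lia.
have PhiM := PhiMax.1.
split=> [[phi' [phi'M step]] | star].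
  have [k kE] := extra_edge_of_one_step_up m_gt0 n_gt2 PhiM phi'M step.
  apply: (star_le_of_extra_edge m_gt0 n_gt2 i_le _ kE).
  exact: (Mon1_mon_edges m_gt0 n_gt2 PhiM).1.
have [q [k [qE kE]]] := extra_edge_of_star_le m_gt0 n_gt2 i_le star.
exact: (one_step_up_of_extra_edge n_gt2 PhiM (extra_edge_max m_gt0 n_gt2 PhiMax qE kE)).
Qed.
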